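(* Let $E=(E^0,E^1,r,s)$ be a graph. (a) Let $k$ be a field. If $\alpha,\beta\in\partial E$ and there exists a nonzero $k$-linear map $T:V_{([\alpha],k)}\to V_{([\beta],k)}$ such that $T\circ\rho_{([\alpha],k)}(a)=\rho_{([\beta],k)}(a)\circ T$ for all $a\in L_k(E)$, then $[\alpha]=[\beta]$ and $T=z\,\mathrm{Id}_{V_{([\alpha],k)}}$ for some $z\in k$. Consequently, for any $\alpha,\beta\in\partial E$ with $[\alpha]\ne[\beta]$ we have $\mathrm{End}_{L_k(E)}V_{([\alpha],k)}\cong k$ and $\mathrm{Hom}_{L_k(E)}(V_{([\alpha],k)},V_{([\beta],k)})=\{0\}$. (b) If $\alpha,\beta\in\partial E$ and there exists a nonzero bounded linear map $T:\mathcal{H}_{[\alpha]}\to\mathcal{H}_{[\beta]}$ such that $T\circ\pi_{[\alpha]}(a)=\pi_{[\beta]}(a)\circ T$ for all $a\in C^*(E)$, then $[\alpha]=[\beta]$ and $T=z\,\mathrm{Id}_{\mathcal{H}_{[\alpha]}}$ for some $z\in\mathbb{C}$. Consequently, for any $\alpha,\beta\in\partial E$ with $[\alpha]\neq[\beta]$ we have $\mathrm{End}_{C^*(E)}\mathcal{H}_{[\alpha]}\cong\mathbb{C}$, $\mathrm{Unitary}_{C^*(E)}\mathcal{H}_{[\alpha]}\cong\mathbb{T}$, and $\mathrm{Hom}_{C^*(E)}(\mathcal{H}_{[\alpha]},\mathcal{H}_{[\beta]})=\{0\}$.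
   Context: A graph $E=(E^0,E^1,r,s)$ has vertex set $E^0$, edge set $E^1$, range and source maps; no countability assumed. A vertex is singular if it emits no edges or infinitely many edges, regular otherwise. Finite paths include vertices (length $0$) and sequences $e_1\cdots e_n$ with $r(e_i)=s(e_{i+1})$; infinite paths are sequences $e_1e_2\cdots$. Boundary paths $\partial E$: infinite paths together with finite paths whose range is singular. The shift $\sigma_E$ removes the first edge (fixes vertices; sends a single edge $e$ to $r(e)$); $\alpha,\beta\in\partial E$ are shift-tail equivalent if $\sigma_E^m(\alpha)=\sigma_E^n(\beta)$ for some $m,n\in\mathbb{N}$; $[\alpha]$ is the class. $L_k(E)$: universal $k$-algebra generated by pairwise orthogonal idempotents $p_v$ and elements $s_e,s_e^*$ with $p_{s(e)}s_e=s_e=s_ep_{r(e)}$, $p_{r(e)}s_e^*=s_e^*=s_e^*p_{s(e)}$, $s_e^*s_f=\delta_{e,f}p_{r(e)}$, $p_v=\sum_{s(e)=v}s_es_e^*$ for regular $v$. $C^*(E)$: universal $C^*$-algebra generated by mutually orthogonal projections $p_v$ and partial isometries $s_e$ with mutually orthogonal ranges, $s_e^*s_e=p_{r(e)}$, $s_es_e^*\le p_{s(e)}$, $p_v=\sum_{s(e)=v}s_es_e^*$ for regular $v$. $V_{(\partial E,k)}$ is the $k$-vector space with basis $\partial E$, $\mathcal{H}_{\partial E}=\ell^2(\partial E)$. $\rho_{E,k}$ and $\pi_E$ are the representations on these spaces given on $\alpha\in\partial E$ by: $p_v\alpha=\alpha$ if $s(\alpha)=v$, else $0$; $s_e\alpha=e\alpha$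 if $s(\alpha)=r(e)$, else $0$; $s_e^*\alpha=\alpha'$ if $\alpha=e\alpha'$, else $0$. $V_{([\alpha],k)}=\mathrm{span}_k[\alpha]$ and $\mathcal{H}_{[\alpha]}=\ell^2([\alpha])$ are invariant subspaces; $\rho_{([\alpha],k)}$ and $\pi_{[\alpha]}$ are the restrictions to them. $\mathrm{End}_{A}$, $\mathrm{Hom}_{A}$ denote (bounded, in the Hilbert case) linear maps intertwining the representations, and $\mathrm{Unitary}_{C^*(E)}\mathcal{H}_{[\alpha]}$ the group of intertwining unitaries; $\mathbb{T}=\{z\in\mathbb{C}:|z|=1\}$. *)

From HB Require Import structures.
From mathcomp Require Import all_boot all_order all_algebra.
From mathcomp Require Import boolp classical_sets functions cardinality reals ereal esum.
From mathcomp Require Import complex.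

Set Implicit Arguments.
Unset Strict Implicit.
Unset Printing Implicit Defensive.

Import Order.TTheory GRing.Theory Num.Theory.
Local Open Scope classical_set_scope.
Local Open Scope ring_scope.

(* A directed graph E = (E^0, E^1, r, s); no countability assumed. *)
Record graph := Graph {
  vert : Type;
  edge : Type;
  rg : edge -> vert;
  sr : edge -> vert }.

Section GraphDefs.
Variable E : graph.

Definition singular (v : vert E) : Prop :=
  [set e : edge E | sr e = v] = set0 \/ ~ finite_set [set e : edge E | sr e = v].

(* finite path starting at vertex v with edge list p (p = [::] : the vertex v) *)
Fixpoint fpath (v : vert E) (p : seq (edge E)) : Prop :=
  match p with
  | [::] => True
  | e :: p' => sr e = v /\ fpath (rg e) p'
  end.

Fixpoint frange (v : vert E) (p : seq (edge E)) : vert E :=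
  match p with
  | [::] => v
  | e :: p' => frange (rg e) p'
  end.

Definition ipath (f : nat -> edge E) : Prop := forall n, rg (f n) = sr (f n.+1).

Inductive bpath : Type :=
  | BFin : vert E -> seq (edge E) -> bpath
  | BInf : (nat -> edge E) -> bpath.

Definition bnd (a : bpath) : Prop :=
  match a with
  | BFin v p => fpath v p /\ singular (frange v p)
  | BInf f => ipath f
  end.

Definition bsrc (a : bpath) : vert E :=
  match a with
  | BFin v _ => v
  | BInf f => sr (f 0%N)
  end.

Definition shift (a : bpath) : bpath :=
  match a with
  | BFin v [::] => BFin v [::]
  | BFin _ (e :: p) => BFin (rg e) p
  | BInf f => BInf (fun n => f n.+1)
  end.

Definition pcons (e : edge E) (a : bpath) : bpath :=
  match a with
  | BFin _ p => BFin (sr e) (e :: p)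
  | BInf f => BInf (fun n => if n is n'.+1 then f n' else e)
  end.

Definition ste (a b : bpath) : Prop :=
  exists m n : nat, iter m shift a = iter n shift b.

Definition cls (a : bpath) : set bpath := [set b | bnd b /\ ste a b].

(* The operators rho(p_v), rho(s_e), rho(s_e^* ) (resp. pi(...)) acting on
   coefficient functions bpath -> K (a vector sum_a f(a) a is encoded by f). *)
Section Ops.
Variable K : nzRingType.

Definition opP (v : vert E) (f : bpath -> K) : bpath -> K :=
  fun g => if `[< bnd g /\ bsrc g = v >] then f g else 0.

Definition opS (e : edge E) (f : bpath -> K) : bpath -> K :=
  fun g => if `[< exists g', bnd g' /\ bsrc g' = rg e /\ g = pcons e g' >]
           then f (shift g) else 0.

Definition opSs (e : edge E) (f : bpath -> K) : bpath -> K :=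
  fun g => if `[< bnd g /\ bsrc g = rg e >] then f (pcons e g) else 0.

(* Elements of the algebra generated by the p_v, s_e, s_e^*: every element
   of L_k(E) (and every element of the dense *-subalgebra of C^*(E)) is a
   K-linear combination of products of these generators. *)
Inductive gterm : Type :=
  | TP of vert E
  | TS of edge E
  | TSs of edge E
  | TZero
  | TAdd of gterm & gterm
  | TMul of gterm & gterm
  | TScale of K & gterm.

Fixpoint opT (t : gterm) (f : bpath -> K) : bpath -> K :=
  match t with
  | TP v => opP v f
  | TS e => opS e f
  | TSs e => opSs e f
  | TZero => fun _ => 0
  | TAdd t1 t2 => fun g => opT t1 f g + opT t2 f g
  | TMul t1 t2 => opT t1 (opT t2 f)
  | TScale c t1 => fun g => c * opT t1 f g
  end.
End Ops.

Section Alg.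
Variable k : fieldType.

Definition inV (A : set bpath) (f : bpath -> k) : Prop :=
  finite_set [set x | f x != 0] /\ (forall x, f x != 0 -> A x).

Definition klin (A B : set bpath) (T : (bpath -> k) -> (bpath -> k)) : Prop :=
  (forall f, inV A f -> inV B (T f)) /\
  (forall (c : k) f g, inV A f -> inV A g ->
      T (fun x => c * f x + g x) = (fun x => c * T f x + T g x)).

Definition kintertw (A : set bpath) (T : (bpath -> k) -> (bpath -> k)) : Prop :=
  forall (t : gterm k) f, inV A f -> T (opT t f) = opT t (T f).

Definition kHom (A B : set bpath) T : Prop := klin A B T /\ kintertw A T.
End Alg.

Section Hilb.
Variable R : realType.
Local Notation C := R[i].

Definition sqmod (z : C) : R := (complex.Re z) ^+ 2 + (complex.Im z) ^+ 2.

Definition sqn (f : bpath -> C) : \bar R :=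
  \esum_(x in [set: {classic bpath}]) (sqmod (f x))%:E.

Definition inH (A : set bpath) (f : bpath -> C) : Prop :=
  (sqn f < +oo)%E /\ (forall x, f x != 0 -> A x).

Definition blin (A B : set bpath) (T : (bpath -> C) -> (bpath -> C)) : Prop :=
  (forall f, inH A f -> inH B (T f)) /\
  (forall (c : C) f g, inH A f -> inH A g ->
      T (fun x => c * f x + g x) = (fun x => c * T f x + T g x)) /\
  (exists M : R, forall f, inH A f -> (sqn (T f) <= M%:E * sqn f)%E).

(* Op is pi(a) for some a in C^*(E): a bounded linear operator on l^2(boundary)
   that is an operator-norm limit of pi of elements of the *-algebra generated
   by the p_v, s_e (this *-algebra is dense in C^*(E)). *)
Definition inCstar (Op : (bpath -> C) -> (bpath -> C)) : Prop :=
  blin bnd bnd Op /\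
  forall eps : R, 0 < eps -> exists t : gterm C,
    forall f, inH bnd f ->
      (sqn (fun x => (Op f x - opT t f x)%R) <= eps%:E * sqn f)%E.

Definition cintertw (A : set bpath) (T : (bpath -> C) -> (bpath -> C)) : Prop :=
  forall Op, inCstar Op -> forall f, inH A f -> T (Op f) = Op (T f).

Definition cHom (A B : set bpath) T : Prop := blin A B T /\ cintertw A T.

Definition cUnitary (A : set bpath) T : Prop :=
  cHom A A T /\ (forall f, inH A f -> sqn (T f) = sqn f) /\
  (forall g, inH A g -> exists2 f, inH A f & T f = g).
End Hilb.

End GraphDefs.

From HB Require Import structures.
From mathcomp Require Import all_boot all_order all_algebra.
From mathcomp Require Import boolp classical_sets functions cardinality reals ereal esum.
From mathcomp Require Import complex.
From mathcomp Require Import ring lra zify fsbigop.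
Import Order.TTheory GRing.Theory Num.Theory.
Local Open Scope classical_set_scope.
Local Open Scope ring_scope.
Set Implicit Arguments.
Unset Strict Implicit.

(* A product of generators p_v, s_e, s_e^* acts on coefficient functions as a
   partial bijection of boundary paths: (t f)(g) = f (phi g) for g in a set P,
   and 0 elsewhere.  Two kinds of such monomials carry the proof.  If x and y
   are shift-tail equivalent, some s_mu s_nu^* sends the basis vector x to y.
   For a boundary path y and finitely many other paths, some diagonal monomial
   (phi = id), built from p_v, s_e s_e^*, p_v - s_e s_e^* and conjugation by
   s_e, fixes y and kills the others.
   Cutting f with f(y) = 0 down by the latter shows that an intertwiner T has
   (T f)(y) = 0: the cut vector is 0 in V_([a],k), and of arbitrarily small
   norm in l^2([a]), where T is bounded.  The former then shows that T maps
   every basis vector y of [a] to z y for one scalar z, so T = z Id by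
   linearity; and if z <> 0, then a lies in the support of T a, i.e. in [b]. *)

Section BoundaryPaths.
Variable E : graph.
Local Notation bp := (bpath E).

Lemma shift_pcons e (a : bp) : bsrc a = rg e -> shift (pcons e a) = a.
Proof. by case: a => [v p|f] //= ->. Qed.

Lemma bsrc_pcons e (a : bp) : bsrc (pcons e a) = sr e.
Proof. by case: a. Qed.

Lemma bnd_pcons e (a : bp) : bnd a -> bsrc a = rg e -> bnd (pcons e a).
Proof.
case: a => [v p [fp sg] /= hv|f ip /= he [|n] /=]; [by subst v|by rewrite he|exact: ip].
Qed.

Lemma bnd_shift (a : bp) : bnd a -> bnd (shift a).
Proof. by case: a => [v [|e p] //= [[_ fp] sg]|f ip n] //; split. Qed.

Lemma bnd_iter_shift n (a : bp) : bnd a -> bnd (iter n (@shift E) a).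
Proof. by elim: n => //= n IH /IH /bnd_shift. Qed.

Definition first_edge (a : bp) : option (edge E) :=
  match a with
  | BFin _ [::] => None
  | BFin _ (e :: _) => Some e
  | BInf f => Some (f 0%N)
  end.

Lemma first_edge_pcons e (a : bp) : first_edge (pcons e a) = Some e.
Proof. by case: a. Qed.

Lemma shift_first_edge_None (a : bp) : first_edge a = None -> shift a = a.
Proof. by case: a => [v [|e p]|f]. Qed.

Lemma pcons_shift (a : bp) e : bnd a -> first_edge a = Some e ->
  [/\ a = pcons e (shift a), bsrc (shift a) = rg e & bsrc a = sr e].
Proof.
case: a => [v [|e' p] [fp _] //= [<-]|f ip [<-]]; first by case: fp => <-.
by split => //=; congr BInf; apply: funext => -[].
Qed.

(* the condition under which [opS e] does not vanish *)
Definition starts_with e (g : bp) : Prop :=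
  exists g', bnd g' /\ bsrc g' = rg e /\ g = pcons e g'.

Lemma starts_withP e g : starts_with e g <-> bnd g /\ first_edge g = Some e.
Proof.
split=> [[g' [bg' [sg' ->]]]|[bg eg]].
  by split; [exact: bnd_pcons|exact: first_edge_pcons].
have [ge se _] := pcons_shift bg eg.
by exists (shift g); split; [exact: bnd_shift|].
Qed.

Lemma ste_refl (a : bp) : ste a a.
Proof. by exists 0%N, 0%N. Qed.

Lemma ste_sym (a b : bp) : ste a b -> ste b a.
Proof. by move=> [m [n h]]; exists n, m. Qed.

Lemma ste_trans (a b c : bp) : ste a b -> ste b c -> ste a c.
Proof.
move=> [m [n h1]] [p [q h2]]; exists (p + m)%N, (n + q)%N.
by rewrite !iterD h1 -iterD addnC iterD h2 -iterD addnC iterD.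
Qed.

Lemma cls_bnd (a : bp) : cls a `<=` @bnd E.
Proof. by move=> x []. Qed.

Lemma cls_self (a : bp) : bnd a -> cls a a.
Proof. by move=> ba; split => //; exact: ste_refl. Qed.

Lemma cls_eq (a b : bp) : cls b a -> cls a = cls b.
Proof.
move=> [_ hba]; apply/seteqP; split => x [bx hx]; split => //.
  exact: ste_trans hba hx.
exact: ste_trans (ste_sym hba) hx.
Qed.

End BoundaryPaths.

Section Monomials.
Variables (E : graph) (K : nzRingType).
Local Notation bp := (bpath E).
Local Notation shift := (@shift E).

Definition partial_comp (P : set bp) (phi : bp -> bp) (f : bp -> K) : bp -> K :=
  fun g => if `[< P g >] then f (phi g) else 0.

Definition acts_by (t : gterm E K) (P : set bp) (phi : bp -> bp) : Prop :=
  [/\ forall f, opT t f = partial_comp P phi f, P `<=` @bnd E & set_inj P phi].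

Definition delta (x : bp) (c : K) : bp -> K := fun g => if `[< g = x >] then c else 0.

Lemma delta_scale x (z : K) : (fun g => z * delta x 1 g) = delta x z.
Proof. by apply: funext => g; rewrite /delta; case: asboolP; rewrite ?mulr1 ?mulr0. Qed.

Lemma scale_at_delta (V : (bp -> K) -> Prop) T x z : V (delta x 1) ->
  (forall f, V f -> T f = fun g => z * f g) -> T (delta x 1) x = z.
Proof. by move=> Vx /(_ _ Vx) ->; rewrite /delta asboolT // mulr1. Qed.

Lemma acts_by_TP v : acts_by (TP K v) [set g | bnd g /\ bsrc g = v] id.
Proof. by split => [//|g []|]. Qed.

Lemma acts_by_TS e : acts_by (TS K e) (starts_with e) shift.
Proof.
split=> [//|g /starts_withP []//|g1 g2].
by move=> /set_mem[g1' [_ [s1 ->]]] /set_mem[g2' [_ [s2 ->]]]; rewrite !shift_pcons // => ->.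
Qed.

Lemma acts_by_TSs e : acts_by (TSs K e) [set g | bnd g /\ bsrc g = rg e] (pcons e).
Proof.
split=> [//|g []//|g1 g2 /set_mem[_ s1] /set_mem[_ s2] /(congr1 shift)].
by rewrite !shift_pcons.
Qed.

Lemma acts_by_mul t1 P1 phi1 t2 P2 phi2 :
  acts_by t1 P1 phi1 -> acts_by t2 P2 phi2 ->
  acts_by (TMul t1 t2) [set g | P1 g /\ P2 (phi1 g)] (phi2 \o phi1).
Proof.
move=> [e1 b1 i1] [e2 b2 i2]; split.
- move=> f /=; rewrite e1 e2; apply: funext => g; rewrite /partial_comp.
  case: (asboolP (P1 g)) => p1; case: (asboolP (P2 (phi1 g))) => p2;
    case: asboolP => //; by [case | move/(_ (conj p1 p2))].
- by move=> g [/b1].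
- move=> g1 g2 /set_mem[p1 q1] /set_mem[p2 q2] /= h.
  by apply: i1; rewrite ?inE //; apply: i2; rewrite ?inE.
Qed.

Lemma acts_by_ext t P phi psi : acts_by t P phi ->
  (forall g, P g -> phi g = psi g) -> acts_by t P psi.
Proof.
move=> [e b i] phi_psi; split => // [f|g1 g2 p1 p2].
  rewrite e; apply: funext => g; rewrite /partial_comp.
  by case: asboolP => // /phi_psi ->.
by rewrite -(phi_psi _ (set_mem p1)) -(phi_psi _ (set_mem p2)); exact: i.
Qed.

Lemma acts_by_delta t P phi x y c : acts_by t P phi -> P y -> phi y = x ->
  opT t (delta x c) = delta y c.
Proof.
move=> [e _ i] py yx; rewrite e; apply: funext => g; rewrite /partial_comp /delta.
case: (asboolP (g = y)) => [->|gy]; first by rewrite asboolT // asboolT.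
case: asboolP => // pg; case: asboolP => // gx; case: gy.
by apply: i; rewrite ?inE // gx yx.
Qed.

Lemma acts_by_id_at t P f y : acts_by t P id -> P y -> opT t f y = f y.
Proof. by move=> [e _ _] py; rewrite e /partial_comp asboolT. Qed.

Definition proj_term e : gterm E K := TMul (TS K e) (TSs K e).

Lemma acts_by_proj e : acts_by (proj_term e) (starts_with e) id.
Proof.
have h := acts_by_mul (acts_by_TS e) (acts_by_TSs e).
have -> : starts_with e
          = [set g | starts_with e g /\ bnd (shift g) /\ bsrc (shift g) = rg e].
  apply/seteqP; split=> [g sg|g [] //]; split => //.
  have [bg /(pcons_shift bg) [_ ? _]] := (starts_withP e g).1 sg.
  by split; first exact: bnd_shift.
apply: acts_by_ext h _ => g [/starts_withP[bg /(pcons_shift bg) [ge _ _]] _] /=.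
by rewrite -ge.
Qed.

Definition coproj_term v e : gterm E K := TAdd (TP K v) (TScale (-1) (proj_term e)).

Lemma acts_by_coproj v e : sr e = v ->
  acts_by (coproj_term v e) [set g | bnd g /\ bsrc g = v /\ ~ starts_with e g] id.
Proof.
move=> sev; have [ep _ _] := acts_by_proj e.
split => [f||//]; last by move=> g [].
apply: funext => g; rewrite -[LHS]/(opP v f g + -1 * opT (proj_term e) f g).
rewrite ep /opP /partial_comp.
case: (asboolP (starts_with e g)) => [sg|nsg].
  have [g' [bg' [sg' ->]]] := sg.
  rewrite asboolT; last by split; [exact: bnd_pcons|rewrite bsrc_pcons].
  by rewrite asboolF ?mulN1r ?subrr // => -[_ [_]]; apply; exists g'.
rewrite mulr0 addr0.
case: (asboolP (bnd g /\ bsrc g = v)) => [[bg sv]|nP]; case: asboolP => //.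
  by case.
by move=> [bg [sv _]]; case: nP.
Qed.

Definition conj_term e t : gterm E K := TMul (TS K e) (TMul t (TSs K e)).

Lemma acts_by_conj e t P : acts_by t P id ->
  acts_by (conj_term e t) [set g | starts_with e g /\ P (shift g)] id.
Proof.
move=> ht; have h := acts_by_mul (acts_by_TS e) (acts_by_mul ht (acts_by_TSs e)).
have -> : [set g | starts_with e g /\ P (shift g)]
          = [set g | starts_with e g /\ P (shift g) /\ bnd (shift g) /\ bsrc (shift g) = rg e].
  apply/seteqP; split=> [g [sg pg]|g [? []] //]; split => //; split => //.
  have [bg /(pcons_shift bg) [_ ? _]] := (starts_withP e g).1 sg.
  by split; first exact: bnd_shift.
apply: acts_by_ext h _ => g [/starts_withP[bg /(pcons_shift bg) [ge _ _]] _] /=.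
by rewrite -ge.
Qed.

End Monomials.

Section Transport.
Variables (E : graph) (K : nzRingType).
Local Notation bp := (bpath E).
Local Notation shift := (@shift E).

(* some monomial of the algebra maps the basis vector [x] to [y] *)
Definition transports (x y : bp) : Prop :=
  exists (t : gterm E K) P phi, acts_by t P phi /\ P y /\ phi y = x.

Lemma transports_refl x : bnd x -> transports x x.
Proof. by move=> bx; exists (TP K (bsrc x)); do 2!eexists; split; first exact: acts_by_TP. Qed.

Lemma transports_trans x y z : transports x y -> transports y z -> transports x z.
Proof.
move=> [t2 [P2 [phi2 [h2 [p2 <-]]]]] [t1 [P1 [phi1 [h1 [p1 e1]]]]].
exists (TMul t1 t2); do 2!eexists; split; first exact: acts_by_mul h1 h2.
by rewrite /= e1.
Qed.

Lemma transports_shift x : bnd x -> transports x (shift x) /\ transports (shift x) x.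
Proof.
move=> bx; case ex: (first_edge x) => [e|]; last first.
  by rewrite shift_first_edge_None //; split; exact: transports_refl.
have [xe se _] := pcons_shift bx ex; split.
  exists (TSs K e); do 2!eexists; split; first exact: acts_by_TSs.
  by split => //; split => //; exact: bnd_shift.
by exists (TS K e); do 2!eexists; split; [exact: acts_by_TS|split => //; exact/starts_withP].
Qed.

Lemma transports_iter_shift n x : bnd x ->
  transports x (iter n shift x) /\ transports (iter n shift x) x.
Proof.
move=> bx; elim: n => [|n [IHu IHd]]; first by split; exact: transports_refl.
have [u d] := transports_shift (bnd_iter_shift n bx).
by split; [exact: transports_trans IHu u|exact: transports_trans d IHd].
Qed.

Lemma transports_ste x y : bnd x -> bnd y -> ste x y -> transports x y.
Proof.
move=> bx bY [m [n mn]]; apply: transports_trans (transports_iter_shift m bx).1 _.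
by rewrite mn; exact: (transports_iter_shift n bY).2.
Qed.

End Transport.

Section Separation.
Variables (E : graph) (K : nzRingType).
Local Notation bp := (bpath E).
Local Notation shift := (@shift E).

Definition separates (x w : bp) : Prop :=
  exists (t : gterm E K) P, acts_by t P id /\ P x /\ ~ P w.

Fixpoint prefix n (x : bp) : seq (edge E) :=
  if n is n'.+1 then
    if first_edge x is Some e then e :: prefix n' (shift x) else [::]
  else [::].

Lemma separates_src x w : bnd x -> ~ (bnd w /\ bsrc w = bsrc x) -> separates x w.
Proof. by move=> bx hw; exists (TP K (bsrc x)); eexists; split; first exact: acts_by_TP. Qed.

Lemma separates_prefix n x w : bnd x -> prefix n x <> prefix n w -> separates x w.
Proof.
(* At the first difference: if only w goes on along e, use p_v - s_e s_e^*; if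
   x goes on along e and w does not, use s_e s_e^*; if both go on along e,
   conjugate by s_e a monomial separating the tails. *)
elim: n x w => [//|n IH] x w bx.
case: (pselect (bnd w /\ bsrc w = bsrc x)) => [[bw sw] | nw _]; last exact: separates_src.
case ex: (first_edge x) => [e|]; last first.
  case ew: (first_edge w) => [e|]; last by rewrite /= ex ew.
  have [_ _ se] := pcons_shift bw ew.
  move=> _; exists (coproj_term K (bsrc x) e); eexists; split.
    by apply: acts_by_coproj; rewrite -se sw.
  split; first by split => //; split => //; move/starts_withP => [_]; rewrite ex.
  by move=> [_ [_]]; apply; apply/starts_withP.
case: (pselect (first_edge w = Some e)) => ew; last first.
  move=> _; exists (proj_term K e); eexists; split; first exact: acts_by_proj.
  by split; [exact/starts_withP|move/starts_withP => []].
rewrite /= ex ew => hne.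
have hs : prefix n (shift x) <> prefix n (shift w) by move=> h; apply: hne; rewrite h.
have [t [P [ht [px pw]]]] := IH _ _ (bnd_shift bx) hs.
exists (conj_term e t); eexists; split; first exact: acts_by_conj ht.
by split; [split => //; exact/starts_withP|case].
Qed.

Lemma prefix_BFin n v p : prefix n (BFin v p) = take n p.
Proof. by elim: n v p => [|n IH] v [|e p] //=; rewrite IH. Qed.

Lemma size_prefix_BInf n f : size (prefix n (BInf f)) = n.
Proof. by elim: n f => [|n IH] f //=; rewrite IH. Qed.

Lemma nth_prefix_BInf n f e0 i : (i < n)%N -> nth e0 (prefix n (BInf f)) i = f i.
Proof. by elim: n f i => [|n IH] f [|i] //= /IH ->. Qed.

Lemma eq_prefix x w : bsrc x = bsrc w -> (forall n, prefix n x = prefix n w) -> x = w.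
Proof.
case: x w => [v p|f] [v' q|g] /= sxw h.
- have := h (size p + size q)%N.
  by rewrite !prefix_BFin !take_oversize ?leq_addr ?leq_addl // => ->; rewrite sxw.
- have := congr1 size (h (size p).+1).
  by rewrite prefix_BFin size_prefix_BInf size_take; case: ltnP => ? ?; lia.
- have := congr1 size (h (size q).+1).
  by rewrite prefix_BFin size_prefix_BInf size_take; case: ltnP => ? ?; lia.
- congr BInf; apply: funext => i.
  by rewrite -(@nth_prefix_BInf i.+1 f (f 0%N)) // h nth_prefix_BInf.
Qed.

Lemma separates_neq x w : bnd x -> x <> w -> separates x w.
Proof.
move=> bx xw; case: (pselect (bnd w /\ bsrc w = bsrc x)) => [[_ sw]|]; last first.
  exact: separates_src.
have [n /(separates_prefix bx) //] : exists n, prefix n x <> prefix n w.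
apply: contrapT => hn; apply/xw/eq_prefix => // n.
by apply: contrapT => ?; apply: hn; exists n.
Qed.

Lemma diagonal_cut x (Y : set bp) : bnd x -> finite_set Y ->
  exists (t : gterm E K) P, [/\ acts_by t P id, P x & forall w, Y w -> w <> x -> ~ P w].
Proof.
move=> bx /(@finite_seqP {classic bp}) [s ->] {Y}.
elim: s => [|w s [t [P [ht px hs]]]].
  by exists (TP K (bsrc x)); eexists; split; first exact: acts_by_TP.
case: (pselect (w = x)) => wx.
  by exists t, P; split => // u; rewrite /= inE => /orP[/eqP -> /(_ wx)[]|/hs].
have [t' [P' [ht' [p'x p'w]]]] := separates_neq bx (nesym wx).
exists (TMul t' t), [set g | P' g /\ P g]; split => //; first exact: acts_by_mul ht' ht.
by move=> u; rewrite /= inE => /orP[/eqP -> _ [/p'w]|/hs h /h hu [_ /hu]].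
Qed.

End Separation.

Section LinearOn.
Variables (X : Type) (K : nzRingType).

Definition lin_on (V : (X -> K) -> Prop) (T : (X -> K) -> (X -> K)) : Prop :=
  forall c f g, V f -> V g -> T (fun x => c * f x + g x) = fun x => c * T f x + T g x.

Lemma lin_on_zero V T : V (fun _ => 0) -> lin_on V T -> T (fun _ => 0) = fun _ => 0.
Proof.
move=> V0 linT; have := linT 1 _ _ V0 V0.
under [fun x => 1 * 0 + 0]funext do rewrite mulr0 addr0.
move=> T0; apply: funext => x; have /= := congr1 (fun F => F x) T0.
by rewrite mul1r -{1}[T _ x]addr0 => /addrI.
Qed.

Lemma lin_on_scale V T z f : V (fun _ => 0) -> lin_on V T -> V f ->
  T (fun x => z * f x) = fun x => z * T f x.
Proof.
move=> V0 linT Vf; have := linT z _ _ Vf V0; rewrite (lin_on_zero V0 linT).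
by under [fun x => z * f x + 0]funext do rewrite addr0; under [RHS]funext do rewrite addr0.
Qed.

End LinearOn.

Section ScalarIntertwiner.
Variables (E : graph) (K : comNzRingType).
Local Notation bp := (bpath E).

Lemma opT_scale (t : gterm E K) z f : opT t (fun x => z * f x) = fun x => z * opT t f x.
Proof.
elim: t f => [v|e|e||t1 IH1 t2 IH2|t1 IH1 t2 IH2|c t IH] f /=; apply: funext => g.
- by rewrite /opP; case: asboolP; rewrite ?mulr0.
- by rewrite /opS; case: asboolP; rewrite ?mulr0.
- by rewrite /opSs; case: asboolP; rewrite ?mulr0.
- by rewrite mulr0.
- by rewrite IH1 IH2 mulrDr.
- by rewrite IH2 IH1.
- by rewrite IH mulrCA.
Qed.

Definition erase (y : bp) (f : bp -> K) : bp -> K :=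
  fun x => if `[< x = y >] then 0 else f x.

Lemma delta_erase y f : f = fun x => f y * delta y 1 x + erase y f x.
Proof.
apply: funext => x; rewrite /delta /erase.
by case: asboolP => [->|_]; rewrite ?mulr1 ?addr0 ?mulr0 ?add0r.
Qed.

(* [V] stands for V_([a],k) or l^2([a]); only these closure properties are used. *)
Variables (V : (bp -> K) -> Prop) (T : (bp -> K) -> (bp -> K)) (a : bp).
Hypotheses (bnd_a : bnd a)
  (V_delta : forall y c, cls a y -> V (delta y c))
  (V_supp : forall f y, V f -> f y != 0 -> cls a y)
  (V_erase : forall f y, V f -> V (erase y f))
  (T_lin : lin_on V T)
  (T_monomial : forall t P phi, acts_by t P phi -> forall f, V f -> T (opT t f) = opT t (T f))
  (T_local : forall f y, V f -> f y = 0 -> T f y = 0).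

Lemma intertwiner_delta y : cls a y -> T (delta y 1) = delta y (T (delta a 1) a).
Proof.
have Ta : T (delta a 1) = delta a (T (delta a 1) a).
  apply: funext => w; rewrite [RHS]/delta; case: asboolP => [-> //|wa].
  by apply: T_local; [exact/V_delta/cls_self|rewrite /delta asboolF].
move=> [bY ay]; have [t [P [phi [ht [py phia]]]]] := transports_ste K bnd_a bY ay.
rewrite -(acts_by_delta 1 ht py phia) (T_monomial ht (V_delta 1 (cls_self bnd_a))).
by rewrite {1}Ta (acts_by_delta _ ht py phia).
Qed.

Lemma intertwiner_scalar f : V f -> T f = fun x => T (delta a 1) a * f x.
Proof.
move=> Vf; apply: funext => y; case: (eqVneq (f y) 0) => fy.
  by rewrite fy mulr0; exact: T_local.
have ay := V_supp Vf fy.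
rewrite [in LHS](delta_erase y f) T_lin; [|exact: V_delta|exact: V_erase].
rewrite [T (delta y 1)]intertwiner_delta //.
have -> : T (erase y f) y = 0 by apply: T_local; [exact: V_erase|rewrite /erase asboolT].
by rewrite /delta asboolT // addr0 mulrC.
Qed.

End ScalarIntertwiner.

Section Algebraic.
Variables (E : graph) (k : fieldType).
Local Notation bp := (bpath E).

Lemma inV0 (A : set bp) : inV A (fun _ => 0 : k).
Proof.
split=> [|x]; last by rewrite eqxx.
by apply: sub_finite_set (finite_set0 _) => x /=; rewrite eqxx.
Qed.

Lemma inV_delta (A : set bp) y (c : k) : A y -> inV A (delta y c).
Proof.
move=> Ay; split=> [|x]; rewrite /delta; last by case: asboolP => [->|]; rewrite ?eqxx.
by apply: sub_finite_set (finite_set1 y) => x /=; case: asboolP => [->|]; rewrite ?eqxx.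
Qed.

Lemma inV_sub (A : set bp) (f g : bp -> k) :
  (forall x, f x = 0 -> g x = 0) -> inV A f -> inV A g.
Proof.
move=> fg [finf suppf]; have sub : [set x | g x != 0] `<=` [set x | f x != 0].
  by move=> x /=; apply: contra => /eqP /fg ->.
by split; [exact: sub_finite_set sub finf|move=> x /sub /suppf].
Qed.

Lemma zero_cut (f : bp -> k) y : bnd y -> finite_set [set x | f x != 0] -> f y = 0 ->
  exists t P, [/\ acts_by t P id, P y & opT t f = fun _ => 0].
Proof.
move=> bY finf fy; have [t [P [ht py notP]]] := diagonal_cut k bY finf.
exists t, P; split => //; have [-> _ _] := ht; apply: funext => x.
rewrite /partial_comp; case: asboolP => // px; apply/eqP; apply: contraT => fx.
by case: (pselect (x = y)) => [xy|/(notP x fx)//]; rewrite xy fy eqxx in fx.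
Qed.

Lemma kHom_local (A B : set bp) (T : (bp -> k) -> bp -> k) : B `<=` @bnd E -> kHom A B T ->
  forall f y, inV A f -> f y = 0 -> T f y = 0.
Proof.
move=> Bbnd [[TV Tlin] Tint] f y Vf fy.
case: (pselect (bnd y)) => [bY|nbY]; last first.
  by apply/eqP; apply: contraT => /(TV f Vf).2 /Bbnd.
have [t [P [ht py tf0]]] := zero_cut bY Vf.1 fy.
by rewrite -(acts_by_id_at (T f) ht py) -Tint // tf0 (lin_on_zero (inV0 A) Tlin).
Qed.

Lemma kHom_scalar (a : bp) B (T : (bp -> k) -> bp -> k) :
  bnd a -> B `<=` @bnd E -> kHom (cls a) B T ->
  forall f, inV (cls a) f -> T f = fun x => T (delta a 1) a * f x.
Proof.
move=> ba Bbnd hT; have [[_ Tlin] Tint] := hT.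
move=> f; apply: intertwiner_scalar => //.
- by move=> y c; exact: inV_delta.
- by move=> g y [_]; apply.
- by move=> g y; apply: inV_sub => x; rewrite /erase; case: asboolP.
- by move=> t P phi _ g; exact: Tint.
- exact: kHom_local hT.
Qed.

Lemma kHom_cls (a b : bp) (T : (bp -> k) -> bp -> k) : bnd a -> kHom (cls a) (cls b) T ->
  (forall f, inV (cls a) f -> T f = fun x => T (delta a 1) a * f x) /\
  (T (delta a 1) a = 0 \/ cls a = cls b).
Proof.
move=> ba hT; split; first exact: kHom_scalar (@cls_bnd E b) hT.
case: (eqVneq (T (delta a 1) a) 0) => [|za]; [by left|right].
have [[TV _] _] := hT; exact/cls_eq/((TV _ (inV_delta 1 (cls_self ba))).2 _ za).
Qed.

Lemma kHom_scale (A : set bp) (z : k) : kHom A A (fun f x => z * f x).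
Proof.
split; [split|] => [f|c f g _ _|t f _]; last by rewrite opT_scale.
  by apply: inV_sub => x ->; rewrite mulr0.
by apply: funext => x; rewrite mulrDr mulrCA.
Qed.

End Algebraic.

Section SquareNorm.
Variables (E : graph) (R : realType).
Local Notation bp := (bpath E).
Local Notation C := R[i].

Lemma sqmod_ge0 (z : C) : 0 <= sqmod z.
Proof. by rewrite /sqmod addr_ge0 // sqr_ge0. Qed.

Lemma sqmod_eq0 (z : C) : sqmod z = 0 -> z = 0.
Proof.
case: z => a b; rewrite /sqmod /= => /eqP.
by rewrite paddr_eq0 ?sqr_ge0 // !sqrf_eq0 => /andP[/eqP -> /eqP ->].
Qed.

Lemma sqmod0 : sqmod (0 : C) = 0.
Proof. by rewrite /sqmod /= expr0n /= addr0. Qed.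

Lemma sqmod1 : sqmod (1 : C) = 1.
Proof. by rewrite /sqmod /= expr0n /= addr0 expr1n. Qed.

Lemma sqmodM (z w : C) : sqmod (z * w) = sqmod z * sqmod w.
Proof. by case: z w => a b [c d]; rewrite /sqmod /=; ring. Qed.

Local Open Scope ereal_scope.

Lemma sqn_ge0 (f : bp -> C) : 0 <= sqn f.
Proof. by apply: esum_ge0 => x _; rewrite lee_fin sqmod_ge0. Qed.

Lemma le_sqn (f g : bp -> C) : (forall x, sqmod (f x) <= sqmod (g x))%R -> sqn f <= sqn g.
Proof. by move=> fg; apply: le_esum => x _; rewrite lee_fin. Qed.

Lemma sqmod_le_sqn (f : bp -> C) y : (sqmod (f y))%:E <= sqn f.
Proof.
apply: esum_ge; exists [set (y : {classic bp})]; first by split; [exact: finite_set1|].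
by rewrite fsbig_set1.
Qed.

Lemma sqn0 : sqn (fun _ : bp => 0%R : C) = 0.
Proof. by rewrite /sqn esum1 // => x _; rewrite sqmod0. Qed.

Lemma sqn_delta (y : bp) (c : C) : sqn (delta y c) = (sqmod c)%:E.
Proof.
rewrite /sqn (eq_esum (b := fun x => if x \in [set (y : {classic bp})]
                                      then (sqmod c)%:E else 0)); last first.
  move=> x _; rewrite /delta; case: asboolP => [->|nx]; first by rewrite mem_set.
  by rewrite memNset // sqmod0.
by rewrite -esum_mkcond esum_set1 // lee_fin sqmod_ge0.
Qed.

Lemma sqn_partial_comp (P : set bp) phi (f : bp -> C) : set_inj P phi ->
  sqn (partial_comp P phi f) <= sqn f.
Proof.
move=> inj; rewrite /sqn (eq_esum (b := fun x => if x \in (P : set {classic bp})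
                                  then (sqmod (f (phi x)))%:E else 0)); last first.
  move=> x _; rewrite /partial_comp; case: asboolP => Px; first by rewrite mem_set.
  by rewrite memNset // sqmod0.
rewrite -esum_mkcond.
rewrite -(@esum_image R {classic bp} {classic bp} P phi (fun x => (sqmod (f x))%:E)) //.
rewrite [leLHS]esum_mkcond; apply: le_esum => x _.
by case: ifP => _ //; rewrite lee_fin sqmod_ge0.
Qed.

Lemma sqn_scale (z : C) (f : bp -> C) : sqn (fun x => z * f x)%R <= (sqmod z)%:E * sqn f.
Proof.
apply: ge_ereal_sup => _ [X XS <-] /=.
under eq_fsbigr do rewrite sqmodM EFinM.
rewrite -ge0_mule_fsumr; last by move=> x; rewrite lee_fin sqmod_ge0.
rewrite lee_wpmul2l ?lee_fin ?sqmod_ge0 //.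
by apply: ereal_sup_ubound; exists X.
Qed.

Lemma sqn_scale_unit (z : C) (f : bp -> C) : sqmod z = 1%R -> sqn (fun x => z * f x)%R = sqn f.
Proof. by move=> z1; apply: eq_esum => x _; rewrite sqmodM z1 mul1r. Qed.

Lemma sqn_tail (f : bp -> C) (eps : R) : sqn f < +oo -> (0 < eps)%R ->
  exists2 Y : set bp, finite_set Y &
    forall g : bp -> C, (forall x, Y x -> g x = 0%R) ->
    (forall x, sqmod (g x) <= sqmod (f x))%R ->
    sqn g <= eps%:E.
Proof.
move=> sf eps0; set a := fun x : {classic bp} => (sqmod (f x))%:E.
have a0 x : 0 <= a x by rewrite lee_fin sqmod_ge0.
have sfin : sqn f \is a fin_num by rewrite ge0_fin_numE ?sqn_ge0.
have : sqn f - eps%:E < sqn f by rewrite -(fineK sfin) -EFinB lte_fin; lra.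
rewrite {2}/sqn /esum => /ereal_sup_gt [_ [Y [finY _] <-]] hY.
exists Y => // g gY gf.
have := esumID Y [set: {classic bp}] a (fun x _ => a0 x).
rewrite !setTI [X in _ = X + _]esum_fset // => fsplit.
have Sfin : \sum_(x \in Y) a x \is a fin_num.
  rewrite ge0_fin_numE ?fsume_ge0 //; apply: le_lt_trans sf.
  by rewrite /sqn fsplit leeDl // esum_ge0.
apply: (@le_trans _ _ (\esum_(x in ~` Y) a x)).
  rewrite /sqn [leRHS]esum_mkcond; apply: le_esum => x _.
  case: ifPn => [_|/negP]; first by rewrite lee_fin.
  by rewrite inE /= => /contrapT /gY ->; rewrite sqmod0.
by apply/ltW; move: hY; rewrite lteBlDr // /sqn fsplit lteD2lE.
Qed.

End SquareNorm.

Section HilbertIntertwiners.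
Variables (E : graph) (R : realType).
Local Notation bp := (bpath E).
Local Notation C := R[i].

Lemma inH0 (A : set bp) : inH A (fun _ => 0 : C).
Proof. by split=> [|x]; [rewrite sqn0 ltry|rewrite eqxx]. Qed.

Lemma inH_delta (A : set bp) y (c : C) : A y -> inH A (delta y c).
Proof.
move=> Ay; split=> [|x]; first by rewrite sqn_delta ltry.
by rewrite /delta; case: asboolP => [->|]; rewrite ?eqxx.
Qed.

Lemma inH_le (A : set bp) (f g : bp -> C) :
  (forall x, sqmod (g x) <= sqmod (f x)) -> inH A f -> inH A g.
Proof.
move=> gf [sf suppf]; split=> [|x gx]; first exact: le_lt_trans (le_sqn gf) sf.
apply: suppf; apply: contra gx => /eqP fx0; apply/eqP/sqmod_eq0/le_anti.
by rewrite sqmod_ge0 andbT -sqmod0 -fx0.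
Qed.

Lemma inH_sub (A B : set bp) (f : bp -> C) : A `<=` B -> inH A f -> inH B f.
Proof. by move=> AB [sf suppf]; split=> // x /suppf /AB. Qed.

Lemma sqmod_partial_comp_le P phi (f : bp -> C) x :
  sqmod (partial_comp P phi f x) <= sqmod (f (phi x)).
Proof. by rewrite /partial_comp; case: asboolP; rewrite ?sqmod0 ?sqmod_ge0. Qed.

Lemma acts_by_inCstar (t : gterm E C) P phi : acts_by t P phi -> inCstar (opT t).
Proof.
move=> [tE tbnd tinj]; have tle f : (sqn (opT t f) <= sqn f)%E.
  by rewrite tE; exact: sqn_partial_comp.
split; last first.
  move=> eps eps0; exists t => f _; under eq_fun do rewrite subrr.
  by rewrite sqn0 mule_ge0 ?sqn_ge0 // lee_fin ltW.
split; [|split; last by exists 1 => f _; rewrite mul1e].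
  move=> f [sf _]; split=> [|x]; first exact: le_lt_trans (tle f) sf.
  by rewrite tE /partial_comp; case: asboolP => [/tbnd|]; rewrite ?eqxx.
move=> c f g _ _; rewrite !tE; apply: funext => x; rewrite /partial_comp.
by case: asboolP; rewrite ?mulr0 ?addr0.
Qed.

Lemma small_cut (f : bp -> C) y (eps : R) : bnd y -> (sqn f < +oo)%E -> f y = 0 ->
  0 < eps -> exists t P, [/\ acts_by t P id, P y & (sqn (opT t f) <= eps%:E)%E].
Proof.
move=> bY sf fy eps0; have [Y finY small] := sqn_tail sf eps0.
have [t [P [ht py notP]]] := diagonal_cut C bY finY.
exists t, P; split => //; have [-> _ _] := ht; apply: small => [x Yx|x].
  rewrite /partial_comp; case: asboolP => // px.
  by case: (pselect (x = y)) => [->//|/(notP x Yx)].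
exact: sqmod_partial_comp_le.
Qed.

Lemma blin_bound (A B : set bp) (T : (bp -> C) -> bp -> C) : blin A B T ->
  exists2 M : R, 0 < M & forall f, inH A f -> (sqn (T f) <= M%:E * sqn f)%E.
Proof.
move=> [_ [_ [M TM]]]; exists (Num.max M 1); first by rewrite lt_max ltr01 orbT.
move=> f Vf; apply: le_trans (TM f Vf) _.
by rewrite lee_wpmul2r ?sqn_ge0 // lee_fin le_max lexx.
Qed.

Lemma cHom_local (A B : set bp) (T : (bp -> C) -> bp -> C) : B `<=` @bnd E ->
  cHom A B T -> forall f y, inH A f -> f y = 0 -> T f y = 0.
Proof.
move=> Bbnd [hT Tint] f y Vf fy; have [TV [Tlin _]] := hT.
case: (pselect (bnd y)) => [bY|nbY]; last first.
  by apply/eqP; apply: contraT => /(TV f Vf).2 /Bbnd.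
have [M M0 TM] := blin_bound hT.
apply/sqmod_eq0/le_anti; rewrite sqmod_ge0 andbT.
apply/ler_addgt0Pr => e e0; rewrite add0r.
have [t [P [ht py small]]] := small_cut bY Vf.1 fy (divr_gt0 e0 M0).
have Vtf : inH A (opT t f).
  by apply: inH_le Vf => x; have [-> _ _] := ht; exact: sqmod_partial_comp_le.
rewrite -(acts_by_id_at (T f) ht py) -(Tint _ (acts_by_inCstar ht)) // -lee_fin.
apply: le_trans (sqmod_le_sqn _ y) _; apply: le_trans (TM _ Vtf) _.
rewrite -[e](mulfVK (lt0r_neq0 M0)) mulrC EFinM.
by rewrite lee_wpmul2l // lee_fin ltW.
Qed.

Lemma cHom_scalar (a : bp) B (T : (bp -> C) -> bp -> C) :
  bnd a -> B `<=` @bnd E -> cHom (cls a) B T ->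
  forall f, inH (cls a) f -> T f = fun x => T (delta a 1) a * f x.
Proof.
move=> ba Bbnd hT; have [[_ [Tlin _]] Tint] := hT.
move=> f; apply: intertwiner_scalar => //.
- by move=> y c; exact: inH_delta.
- by move=> g y [_]; apply.
- move=> g y; apply: inH_le => x; rewrite /erase.
  by case: asboolP; rewrite ?sqmod0 ?sqmod_ge0.
- by move=> t P phi ht g; exact: Tint (acts_by_inCstar ht) g.
- exact: cHom_local hT.
Qed.

Lemma cHom_cls (a b : bp) (T : (bp -> C) -> bp -> C) : bnd a -> cHom (cls a) (cls b) T ->
  (forall f, inH (cls a) f -> T f = fun x => T (delta a 1) a * f x) /\
  (T (delta a 1) a = 0 \/ cls a = cls b).
Proof.
move=> ba hT; split; first exact: cHom_scalar (@cls_bnd E b) hT.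
case: (eqVneq (T (delta a 1) a) 0) => [|za]; [by left|right].
have [[TV _] _] := hT; exact/cls_eq/((TV _ (inH_delta 1 (cls_self ba))).2 _ za).
Qed.

Lemma cHom_scale (A : set bp) (z : C) : A `<=` @bnd E -> cHom A A (fun f x => z * f x).
Proof.
move=> Abnd; split; [split; [|split]|].
- move=> f [sf suppf]; split=> [|x zfx]; last first.
    by apply: suppf; apply/eqP => fx0; move: zfx; rewrite fx0 mulr0 eqxx.
  apply: le_lt_trans (sqn_scale z f) _.
  by rewrite -(fineK (_ : sqn f \is a fin_num)) ?ge0_fin_numE ?sqn_ge0 // -EFinM ltry.
- by move=> c f g _ _; apply: funext => x; rewrite mulrDr mulrCA.
- by exists (sqmod z) => f _; exact: sqn_scale.
- move=> Op [[_ [Oplin _]] _] f Vf.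
  by rewrite (lin_on_scale z (inH0 (@bnd E)) Oplin (inH_sub Abnd Vf)).
Qed.

Lemma cUnitary_scale (A : set bp) (z : C) : A `<=` @bnd E -> sqmod z = 1 ->
  cUnitary A (fun f x => z * f x).
Proof.
move=> Abnd z1; have z0 : z != 0.
  by apply: contra_eqN z1 => /eqP ->; rewrite sqmod0 eq_sym oner_eq0.
have zV1 : sqmod z^-1 = 1 by have := sqmodM z^-1 z; rewrite mulVf // sqmod1 z1 mulr1.
split; [exact: cHom_scale|split=> [f _|g Vg]; first exact: sqn_scale_unit].
exists (fun x => z^-1 * g x); first by apply: inH_le Vg => x; rewrite sqmodM zV1 mul1r.
by apply: funext => x; rewrite mulrA mulfV // mul1r.
Qed.

Lemma cUnitary_sqmod (a : bp) (U : (bp -> C) -> bp -> C) : bnd a ->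
  cUnitary (cls a) U -> sqmod (U (delta a 1) a) = 1.
Proof.
move=> ba [hU [Uiso _]].
have Va : inH (cls a) (delta a (1 : C)) := inH_delta 1 (cls_self ba).
have Uz : U (delta a 1) = delta a (U (delta a 1) a).
  by rewrite {1}(cHom_scalar ba (@cls_bnd E a) hU Va) delta_scale.
by have := Uiso _ Va; rewrite {1}Uz !sqn_delta sqmod1 => /(congr1 fine).
Qed.

End HilbertIntertwiners.

Theorem proposition3p13 (E : graph) :
  (* (a): Leavitt path algebra L_k(E), representations on V_([alpha],k) *)
  ((forall (k : fieldType) (a b : bpath E) (T : (bpath E -> k) -> (bpath E -> k)),
      bnd a -> bnd b -> kHom (cls a) (cls b) T ->
      (exists f, inV (cls a) f /\ T f <> (fun _ => 0)) ->
      cls a = cls b /\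
      exists z : k, forall f, inV (cls a) f -> T f = (fun x => z * f x)) /\
   (forall (k : fieldType) (a b : bpath E),
      bnd a -> bnd b -> cls a <> cls b ->
      (* End_{L_k(E)} V_([a],k) = k Id, via the bijection z |-> z Id *)
      ((forall z : k, kHom (cls a) (cls a) (fun f x => z * f x)) /\
       (forall T : (bpath E -> k) -> (bpath E -> k), kHom (cls a) (cls a) T ->
          exists! z : k, forall f, inV (cls a) f -> T f = (fun x => z * f x))) /\
      (* Hom_{L_k(E)}(V_([a],k), V_([b],k)) = {0} *)
      (forall T : (bpath E -> k) -> (bpath E -> k), kHom (cls a) (cls b) T ->
          forall f, inV (cls a) f -> T f = (fun _ => 0)))) /\
  (* (b): graph C*-algebra C^*(E), representations on H_[alpha] = l^2([alpha]) *)
  ((forall (R : realType) (a b : bpath E) (T : (bpath E -> R[i]) -> (bpath E -> R[i])),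
      bnd a -> bnd b -> cHom (cls a) (cls b) T ->
      (exists f, inH (cls a) f /\ T f <> (fun _ => 0)) ->
      cls a = cls b /\
      exists z : R[i], forall f, inH (cls a) f -> T f = (fun x => z * f x)) /\
   (forall (R : realType) (a b : bpath E),
      bnd a -> bnd b -> cls a <> cls b ->
      (* End_{C^*(E)} H_[a] = C Id, via the bijection z |-> z Id *)
      ((forall z : R[i], cHom (cls a) (cls a) (fun f x => z * f x)) /\
       (forall T : (bpath E -> R[i]) -> (bpath E -> R[i]), cHom (cls a) (cls a) T ->
          exists! z : R[i], forall f, inH (cls a) f -> T f = (fun x => z * f x))) /\
      (* Unitary_{C^*(E)} H_[a] = T Id, via the bijection z |-> z Id, |z| = 1 *)
      ((forall z : R[i], sqmod z = 1 -> cUnitary (cls a) (fun f x => z * f x)) /\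
       (forall U : (bpath E -> R[i]) -> (bpath E -> R[i]), cUnitary (cls a) U ->
          exists! z : R[i], sqmod z = 1 /\
            forall f, inH (cls a) f -> U f = (fun x => z * f x))) /\
      (* Hom_{C^*(E)}(H_[a], H_[b]) = {0} *)
      (forall T : (bpath E -> R[i]) -> (bpath E -> R[i]), cHom (cls a) (cls b) T ->
          forall f, inH (cls a) f -> T f = (fun _ => 0)))).
Proof.
have scale0 (K : nzRingType) (f : bpath E -> K) : (fun x => 0 * f x) = fun _ => 0.
  by apply: funext => x; rewrite mul0r.
split; split.
- move=> k a b T ba _ hT [f [Vf Tf]]; have [Tz [z0|ab]] := kHom_cls ba hT.
    by case: Tf; rewrite Tz // z0 scale0.
  by split => //; exists (T (delta a 1) a).
- move=> k a b ba _ ab; split; [split|] => [z|T hT|T hT f Vf].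
  + exact: kHom_scale.
  + exists (T (delta a 1) a); split; first exact: kHom_scalar (@cls_bnd E a) hT.
    by move=> z; apply: scale_at_delta; exact: inV_delta (cls_self ba).
  + by have [Tz [z0|//]] := kHom_cls ba hT; rewrite Tz // z0 scale0.
- move=> R a b T ba _ hT [f [Vf Tf]]; have [Tz [z0|ab]] := cHom_cls ba hT.
    by case: Tf; rewrite Tz // z0 scale0.
  by split => //; exists (T (delta a 1) a).
- move=> R a b ba _ ab.
  have Va : inH (cls a) (delta a (1 : R[i])) := inH_delta 1 (cls_self ba).
  split; [split|split; [split|]] => [z|T hT|z|U hU|T hT f Vf].
  + exact/cHom_scale/cls_bnd.
  + exists (T (delta a 1) a); split; first exact: cHom_scalar (@cls_bnd E a) hT.
    by move=> z; apply: scale_at_delta.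
  + exact/cUnitary_scale/cls_bnd.
  + exists (U (delta a 1) a); split.
      by split; [exact: cUnitary_sqmod hU|exact: cHom_scalar (@cls_bnd E a) hU.1].
    by move=> z [_]; apply: scale_at_delta.
  + by have [Tz [z0|//]] := cHom_cls ba hT; rewrite Tz // z0 scale0.
Qed.
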